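(* For every integer $n\ge0$, $$\sum_{i=0}^n-{n\brace i}(-2)^{-2i}=(-2)^{-2n-1}.$$
   Context: The Euler polynomials $E_n(x)$ are defined by $\frac{2e^{xt}}{e^t+1}=\sum_{n\ge0}E_n(x)\frac{t^n}{n!}$. For $N\ge0$, the numbers ${N\brace j}$ ($0\le j\le N$) are defined by $\sum_{j=0}^N{N\brace j}x^{2j}=x^{2N+1}-E_{2N+1}(x)$. *)

From mathcomp Require Import all_boot all_order all_algebra.
Set Implicit Arguments. Unset Strict Implicit. Unset Printing Implicit Defensive.
Import Order.TTheory GRing.Theory Num.Theory.
Local Open Scope ring_scope.

(* The generating function
   2 e^{xt}/(e^t+1) = sum_n E_n(x) t^n/n!  is equivalent (multiply by e^t+1
   and compare coefficients of t^n/n!) to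
     sum_{k<=n} C(n,k) E_k(x) + E_n(x) = 2 x^n,
   i.e.  E_n(x) = x^n - 1/2 * sum_{k<n} C(n,k) E_k(x).
   euler_seq n = [:: E_0; ...; E_n]. *)
Fixpoint euler_seq (n : nat) : seq {poly rat} :=
  match n with
  | 0 => [:: 1]
  | n'.+1 =>
      let s := euler_seq n' in
      rcons s ('X^n - 2^-1 *: \sum_(k < n) ('C(n, k))%:R *: s`_k)
  end.

Definition euler_poly (n : nat) : {poly rat} := (euler_seq n)`_n.

Definition ebrace (N j : nat) : rat :=
  ('X^(2 * N + 1) - euler_poly (2 * N + 1))`_(2 * j).

From mathcomp Require Import all_boot all_order all_algebra.
From mathcomp Require Import ring lra.
Set Implicit Arguments. Unset Strict Implicit. Unset Printing Implicit Defensive.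
Import Order.TTheory GRing.Theory Num.Theory.
Local Open Scope ring_scope.

(* Put P := X^N - E_N with N = 2n+1.  The sum is -1/2 (P(x) + P(-x)) at
   x = -1/2, since P(x) + P(-x) doubles the even part of P.  At x = -1/2 we
   have -x = x + 1, and E_N(x + 1) + E_N(x) = 2 x^N turns P(x) + P(x + 1)
   into (x + 1)^N - x^N = (-x)^N - x^N = -2 x^N, because N is odd. *)

Lemma big_ord_double (V : nmodType) k (F : nat -> V) :
  \sum_(i < 2 * k) F i = \sum_(j < k) (F (2 * j)%N + F (2 * j).+1).
Proof.
elim: k => [|k IHk]; first by rewrite !big_ord0.
by rewrite mulnS addnC addn2 !big_ord_recr /= IHk addrA.
Qed.

Lemma horner_addN (R : comNzRingType) (p : {poly R}) (x : R) k :
  (size p <= 2 * k)%N ->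
  p.[x] + p.[- x] = (\sum_(j < k) p`_(2 * j) * x ^+ (2 * j)) *+ 2.
Proof.
move=> size_p; rewrite !(horner_coef_wide _ size_p) -big_split.
rewrite (big_ord_double _ (fun i => p`_i * x ^+ i + p`_i * (- x) ^+ i)).
rewrite -sumrMnl; apply: eq_bigr => j _.
have even_sign : (-1 : R) ^+ (2 * j) = 1 by rewrite exprM sqrrN !expr1n.
rewrite !(exprNn x) (exprS (-1)) even_sign mul1r mulr1.
by rewrite mulN1r mulrN subrr addr0.
Qed.

Lemma size_euler_seq n : size (euler_seq n) = n.+1.
Proof. by elim: n => //= n IHn; rewrite size_rcons IHn. Qed.

Lemma nth_euler_seq n k : (k <= n)%N -> (euler_seq n)`_k = euler_poly k.
Proof.
elim: n => [|n IHn]; first by rewrite leqn0 => /eqP->.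
rewrite leq_eqVlt => /orP[/eqP-> //|]; rewrite ltnS => le_kn /=.
by rewrite nth_rcons size_euler_seq ltnS le_kn IHn.
Qed.

Lemma euler_polyS m :
  euler_poly m.+1 =
    'X^(m.+1) - 2^-1 *: \sum_(k < m.+1) 'C(m.+1, k)%:R *: euler_poly k.
Proof.
rewrite /euler_poly /= nth_rcons size_euler_seq ltnn eqxx.
by congr (_ - _ *: _); apply: eq_bigr => k _; rewrite nth_euler_seq // -ltnS.
Qed.

Lemma size_euler_poly m : (size (euler_poly m) <= m.+1)%N.
Proof.
elim/ltn_ind: m => -[|m] IHm; first by rewrite size_poly1.
rewrite euler_polyS; apply: leq_trans (size_polyD _ _) _.
rewrite geq_max size_polyXn size_polyN leqnn /=.
apply: leq_trans (size_scale_leq _ _) _.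
apply: leq_trans (size_sum _ _ _) _; apply/bigmax_leqP => k _.
apply: leq_trans (size_scale_leq _ _) (leq_trans (IHm k (ltn_ord k)) _).
exact: leqW.
Qed.

Lemma horner_euler_polyS m (x : rat) :
  (euler_poly m.+1).[x] =
    x ^+ m.+1 - 2^-1 * \sum_(k < m.+1) 'C(m.+1, k)%:R * (euler_poly k).[x].
Proof.
rewrite euler_polyS hornerD hornerN hornerZ hornerXn horner_sum.
by congr (_ - _ * _); apply: eq_bigr => k _; rewrite hornerZ.
Qed.

Lemma euler_poly_shift m (x : rat) :
  (euler_poly m).[x + 1] + (euler_poly m).[x] = 2 * x ^+ m.
Proof.
elim/ltn_ind: m => -[|m] IHm; first by rewrite /euler_poly /= !hornerC mulr1.
have binomial_sum : \sum_(k < m.+1) 'C(m.+1, k)%:R * x ^+ k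
    = (x + 1) ^+ m.+1 - x ^+ m.+1.
  rewrite exprD1n [in RHS]big_ord_recr /= binn mulr1n addrK.
  by apply: eq_bigr => k _; rewrite mulr_natl.
have sum_shift :
    \sum_(k < m.+1) 'C(m.+1, k)%:R * (euler_poly k).[x + 1]
  + \sum_(k < m.+1) 'C(m.+1, k)%:R * (euler_poly k).[x]
  = 2 * ((x + 1) ^+ m.+1 - x ^+ m.+1).
  rewrite -big_split -binomial_sum mulr_sumr /=.
  by apply: eq_bigr => k _; rewrite -mulrDr IHm // mulrCA.
rewrite !horner_euler_polyS; lra.
Qed.

Lemma horner_Xn_sub_euler_shift m (x : rat) :
  ('X^m - euler_poly m).[x] + ('X^m - euler_poly m).[x + 1]
  = (x + 1) ^+ m - x ^+ m.
Proof.
have := euler_poly_shift m x; rewrite !hornerD !hornerN !hornerXn; lra.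
Qed.

Theorem lemma5p7 (n : nat) :
  \sum_(0 <= i < n.+1) - ebrace n i * (-2 : rat) ^- (2 * i)
  = (-2 : rat) ^- (2 * n + 1).
Proof.
set x : rat := (-2)^-1; set N := (2 * n + 1)%N.
set P : {poly rat} := 'X^N - euler_poly N.
have size_P : (size P <= 2 * n.+1)%N.
  apply: leq_trans (size_polyD _ _) _.
  rewrite size_polyN geq_max mulnS addnC addn2 /N addn1.
  by rewrite size_polyXn size_euler_poly ltnSn.
have oppx : - x = x + 1 by rewrite /x; field.
have odd_power : (- x) ^+ N = - x ^+ N.
  by rewrite exprNn /N addn1 (exprS (-1)) exprM sqrrN !expr1n mulr1 mulN1r.
have even_part := horner_addN x size_P.
have sum_P : P.[x] + P.[- x] = - (2 * x ^+ N).
  by rewrite [in P.[- x]]oppx horner_Xn_sub_euler_shift -oppx odd_power; ring.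
have -> : \sum_(0 <= i < n.+1) - ebrace n i * (-2 : rat) ^- (2 * i)
        = - \sum_(j < n.+1) P`_(2 * j) * x ^+ (2 * j).
  by rewrite big_mkord -sumrN; apply: eq_bigr => j _; rewrite exprVn mulNr.
by move: even_part; rewrite -exprVn sum_P mulr2n; lra.
Qed.
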